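(* Let $p_s\in(0,1)$, $p_f=1-p_s$, and let $p_{-1},p_0,p_1\in[0,1]$ with $p_{-1}+p_0+p_1=1$. Let $(h(t))$ be i.i.d. with $\mathbb{P}[h(t)=1]=p_s$, $\mathbb{P}[h(t)=0]=p_f$, and let $(\delta(t))$ be i.i.d., independent of $(h(t))$, with $\mathbb{P}[\delta(t)=k]=p_k$ for $k\in\{-1,0,1\}$. Define $$\Delta(t)=\begin{cases}\max\{1,\delta(t)+1\}, & h(t)=1,\\ \max\{1,\ \Delta(t-1)+\delta(t)-\delta(t-1)+1\}, & h(t)=0,\end{cases}$$ and $F=1-p_s(1-p_{-1})$. Then in steady state $$\mathbb{P}[\Delta(t)=i]=\begin{cases} p_0p_s+p_{-1}p_s\big(1+p_f(1-p_{-1})\big), & i=1,\\ p_{-1}p_sp_fF+p_0p_sp_f(1-p_{-1})+p_1p_s, & i=2,\\ \big(p_{-1}p_sp_f^2+p_0p_sp_f\big)F+p_1p_sp_f(1-p_{-1}), & i=3,\\ \big(p_{-1}p_sp_f^{\,i-1}+p_0p_sp_f^{\,i-2}+p_1p_sp_f^{\,i-3}\big)F, & i\ge4,\end{cases}$$ and the average AoI is $$\bar\Delta=\sum_{i=1}^\infty i\,\mathbb{P}[\Delta(t)=i]=p_1+\frac{1}{p_s}.$$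
   Context: Model: $h(t)=1$ means successful decoding at the receiver in slot $t$; $\delta(t)\in\{-1,0,1\}$ is the random clock drift (in slots) of the receiver's clock relative to the transmitter's clock; $\Delta(t)$ is the age of information at the receiver. ''Steady state'' refers to the stationary distribution of the Markov chain $(\delta(t),\Delta(t))$, i.e. the limit as $t\to\infty$. *)

From Stdlib Require Import Reals Lra ZArith List.
Import ListNotations.
From Coquelicot Require Import Coquelicot.
Open Scope R_scope.

Definition deltas : list Z := [(-1)%Z; 0%Z; 1%Z].

Definition pdelta (pm p0 p1 : R) (d : Z) : R :=
  if Z.eqb d (-1) then pm else if Z.eqb d 0 then p0 else if Z.eqb d 1 then p1 else 0.

Definition ind (b : bool) : R := if b then 1 else 0.

Definition aoi_succ (d' : Z) : nat := Z.to_nat (Z.max 1 (d' + 1)).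
Definition aoi_fail (d : Z) (a : nat) (d' : Z) : nat :=
  Z.to_nat (Z.max 1 (Z.of_nat a + d' - d + 1)).

(* One-step transition probability of the Markov chain (delta, Delta):
   from (d, a) to (d', a'), with h(t) ~ Bernoulli(ps) and delta(t) ~ pdelta,
   independent of each other and of the past. *)
Definition trans (ps pm p0 p1 : R) (d : Z) (a : nat) (d' : Z) (a' : nat) : R :=
  pdelta pm p0 p1 d' *
  (ps * ind (Nat.eqb a' (aoi_succ d')) + (1 - ps) * ind (Nat.eqb a' (aoi_fail d a d'))).

Definition sumD (f : Z -> R) : R := f (-1)%Z + f 0%Z + f 1%Z.

(* pi : Z -> nat -> R is a stationary distribution of the chain on the state space
   {-1,0,1} x {1,2,...}  (values of pi at d outside {-1,0,1} are irrelevant). *)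
Definition stationary (ps pm p0 p1 : R) (pi : Z -> nat -> R) : Prop :=
  (forall d a, In d deltas -> 0 <= pi d a) /\
  (forall d, In d deltas -> pi d 0%nat = 0) /\
  is_series (fun a => sumD (fun d => pi d a)) 1 /\
  (forall d' a', In d' deltas ->
     is_series (fun a => sumD (fun d => pi d a * trans ps pm p0 p1 d a d' a'))
               (pi d' a')).

Definition marg (pi : Z -> nat -> R) (i : nat) : R := sumD (fun d => pi d i).

Definition aoi_pmf (ps pm p0 p1 : R) (i : nat) : R :=
  let pf := 1 - ps in
  let F := 1 - ps * (1 - pm) in
  match i with
  | 0%nat => 0
  | 1%nat => p0 * ps + pm * ps * (1 + pf * (1 - pm))
  | 2%nat => pm * ps * pf * F + p0 * ps * pf * (1 - pm) + p1 * ps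
  | 3%nat => (pm * ps * pf ^ 2 + p0 * ps * pf) * F + p1 * ps * pf * (1 - pm)
  | _ => (pm * ps * pf ^ (i - 1) + p0 * ps * pf ^ (i - 2) + p1 * ps * pf ^ (i - 3)) * F
  end.

From Pilot Require Import Defs.
From Stdlib Require Import Reals Lra Lia ZArith List.
From Coquelicot Require Import Coquelicot.
Open Scope R_scope.

(* The clock-corrected age [Delta - delta] is what makes the chain tractable: at a
   failure the drifts telescope and it grows by exactly one (the clipping at 1 only acts
   on null states), while a success resets it to 1, or to 2 when the fresh drift is -1.
   Its stationary law therefore solves a first-order renewal recursion, whose unique
   solution vanishes below 1, equals p_s (1 - p_{-1}) at 1 and p_s F p_f^(b-2) from 2 on.
   As delta(t) is drawn afresh in every slot, the joint stationary law of (delta, Delta)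
   is determined by the law of Delta(t-1) - delta(t-1).  This gives existence and
   uniqueness of the stationary distribution and the marginal of Delta, whose geometric
   tail sums to the mean p_1 + 1/p_s. *)

Lemma sum_f_R0_single (f : nat -> R) (m N : nat) :
  (m <= N)%nat -> (forall n, n <> m -> f n = 0) -> sum_f_R0 f N = f m.
Proof.
  intros HmN Hf. induction N as [| N IH]; simpl.
  - now replace m with 0%nat by lia.
  - destruct (Nat.eq_dec m (S N)) as [-> | Hm].
    + rewrite sum_eq_R0; [ring |]. intros n Hn. apply Hf. lia.
    + rewrite IH, (Hf (S N)) by lia. ring.
Qed.

Lemma is_series_finite_support (f : nat -> R) (N : nat) :
  (forall n, (N < n)%nat -> f n = 0) -> is_series f (sum_f_R0 f N).
Proof.
  intros Hf. apply is_series_Reals. intros eps Heps. exists N. intros n Hn.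
  assert (Htail : sum_f_R0 f n = sum_f_R0 f N).
  { induction Hn as [| n Hn IH]; [reflexivity |].
    simpl. rewrite IH, (Hf (S n)) by lia. ring. }
  rewrite Htail. unfold R_dist. rewrite Rminus_diag, Rabs_R0. exact Heps.
Qed.

(* [is_series_ext] at type [R], so that the pointwise goals are ring equations. *)
Lemma is_series_ext_R (u v : nat -> R) (l : R) :
  (forall n, u n = v n) -> is_series u l -> is_series v l.
Proof. apply is_series_ext. Qed.

Lemma is_series_sumD (u : Z -> nat -> R) (l : Z -> R) :
  (forall d, In d deltas -> is_series (u d) (l d)) ->
  is_series (fun a => sumD (fun d => u d a)) (sumD l).
Proof.
  intros Hu. unfold sumD.
  apply (is_series_plus (V := R_NormedModule));
    [apply (is_series_plus (V := R_NormedModule)) |]; apply Hu; simpl; tauto.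
Qed.

Lemma is_series_geom_deriv (q : R) : 0 <= q < 1 ->
  is_series (fun k => INR (S k) * q ^ k) (/ (1 - q) * / (1 - q)).
Proof.
  intros Hq.
  assert (Hgeom : is_series (fun k => q ^ k) (/ (1 - q)))
    by (apply is_series_geom; rewrite Rabs_pos_eq; lra).
  assert (Hpos : forall k, 0 <= q ^ k) by (intros; apply pow_le; lra).
  eapply is_series_ext_R; [| exact (is_series_mult_pos _ _ _ _ Hgeom Hgeom Hpos Hpos)].
  intros n. cbv beta. rewrite (sum_eq _ (fun _ => q ^ n)).
  - rewrite sum_cte. ring.
  - intros i Hi. rewrite <- pow_add. f_equal. lia.
Qed.

Lemma is_series_shift_R (u : nat -> R) (n : nat) (l : R) :
  (0 < n)%nat -> is_series (fun k => u (n + k)%nat) (l - sum_f_R0 u (pred n)) ->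
  is_series u l.
Proof. intros Hn H. apply (is_series_decr_n u n l Hn). now rewrite sum_n_Reals. Qed.

Lemma first_order_recursion_unique (c : Z -> R) (q : R) (g h : Z -> R) :
  (forall b, (b <= 0)%Z -> g b = h b) ->
  (forall b, g b = c b + q * g (b - 1)%Z) -> (forall b, h b = c b + q * h (b - 1)%Z) ->
  forall b, g b = h b.
Proof.
  intros H0 Hg Hh.
  assert (Hnat : forall n, g (Z.of_nat n) = h (Z.of_nat n)).
  { induction n as [| n IH]; [apply H0; lia |].
    rewrite Hg, Hh. replace (Z.of_nat (S n) - 1)%Z with (Z.of_nat n) by lia.
    now rewrite IH. }
  intros b. destruct (Z.le_gt_cases b 0) as [Hb | Hb]; [now apply H0 |].
  rewrite <- (Z2Nat.id b) by lia. apply Hnat.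
Qed.

Lemma In_deltas_bounds (d : Z) : In d deltas -> (-1 <= d <= 1)%Z.
Proof. simpl. lia. Qed.

Lemma ind_eqb_eq (n m : nat) : n = m -> Defs.ind (Nat.eqb n m) = 1.
Proof. intros ->. now rewrite Nat.eqb_refl. Qed.

Lemma ind_eqb_neq (n m : nat) : n <> m -> Defs.ind (Nat.eqb n m) = 0.
Proof. intros H. apply Nat.eqb_neq in H. now rewrite H. Qed.

(* Only ages [a <= a' + 1] can fail into age [a'], since the drift changes by at most 2. *)
Definition fail_inflow (pi : Z -> nat -> R) (d' : Z) (a' : nat) : R :=
  sumD (fun d => sum_f_R0 (fun a => pi d a * Defs.ind (Nat.eqb a' (aoi_fail d a d'))) (S a')).

Definition inflow (ps pm p0 p1 : R) (pi : Z -> nat -> R) (d' : Z) (a' : nat) : R :=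
  pdelta pm p0 p1 d' * (ps * Defs.ind (Nat.eqb a' (aoi_succ d')) + (1 - ps) * fail_inflow pi d' a').

Definition balanced (ps pm p0 p1 : R) (pi : Z -> nat -> R) : Prop :=
  forall d' a', In d' deltas -> pi d' a' = inflow ps pm p0 p1 pi d' a'.

Lemma is_series_fail_terms (pi : Z -> nat -> R) (d d' : Z) (a' : nat) :
  In d deltas -> In d' deltas ->
  is_series (fun a => pi d a * Defs.ind (Nat.eqb a' (aoi_fail d a d')))
    (sum_f_R0 (fun a => pi d a * Defs.ind (Nat.eqb a' (aoi_fail d a d'))) (S a')).
Proof.
  intros Hd%In_deltas_bounds Hd'%In_deltas_bounds.
  apply is_series_finite_support. intros a Ha.
  rewrite ind_eqb_neq; [ring |]. unfold aoi_fail. lia.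
Qed.

Lemma is_series_inflow (ps pm p0 p1 : R) (pi : Z -> nat -> R) (d' : Z) (a' : nat) :
  In d' deltas -> is_series (fun a => sumD (fun d => pi d a)) 1 ->
  is_series (fun a => sumD (fun d => pi d a * trans ps pm p0 p1 d a d' a'))
    (inflow ps pm p0 p1 pi d' a').
Proof.
  intros Hd' Htot.
  set (c := pdelta pm p0 p1 d').
  set (s := Defs.ind (Nat.eqb a' (aoi_succ d'))).
  apply (is_series_ext_R
    (fun a => sumD (fun d => pi d a) * (c * ps * s)
            + sumD (fun d => pi d a * Defs.ind (Nat.eqb a' (aoi_fail d a d'))) * (c * (1 - ps)))).
  { intros a. unfold trans, sumD. fold c s. ring. }
  replace (inflow ps pm p0 p1 pi d' a')
    with (1 * (c * ps * s) + fail_inflow pi d' a' * (c * (1 - ps)))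
    by (unfold inflow; fold c s; ring).
  apply (is_series_plus (V := R_NormedModule)); apply is_series_scal_r.
  - exact Htot.
  - apply is_series_sumD. intros d Hd. now apply is_series_fail_terms.
Qed.

Lemma stationary_balanced (ps pm p0 p1 : R) (pi : Z -> nat -> R) :
  stationary ps pm p0 p1 pi -> balanced ps pm p0 p1 pi.
Proof.
  intros (_ & _ & Htot & Hbal) d' a' Hd'.
  rewrite <- (is_series_unique _ _ (Hbal d' a' Hd')).
  exact (is_series_unique _ _ (is_series_inflow ps pm p0 p1 pi d' a' Hd' Htot)).
Qed.

(* [Pos.to_nat] is [simpl never], so concrete ages [Z.to_nat n] must be unfolded by hand. *)
Ltac eval_ages := cbn; cbv [PosDef.Pos.to_nat PosDef.Pos.iter_op Nat.add Defs.ind]; cbn.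

Definition zero_ext (pi : Z -> nat -> R) (d z : Z) : R :=
  if (z <? 0)%Z then 0 else pi d (Z.to_nat z).

(* The law of [Delta - delta] under [pi]. *)
Definition offset_law (pi : Z -> nat -> R) (b : Z) : R :=
  sumD (fun d => zero_ext pi d (b + d)).

Lemma zero_ext_neg (pi : Z -> nat -> R) (d z : Z) : (z < 0)%Z -> zero_ext pi d z = 0.
Proof. intros Hz. unfold zero_ext. destruct (Z.ltb_spec z 0); [reflexivity | lia]. Qed.

Lemma offset_law_ext (pi pi' : Z -> nat -> R) :
  (forall d a, In d deltas -> pi d a = pi' d a) ->
  forall b, offset_law pi b = offset_law pi' b.
Proof.
  intros H b. unfold offset_law, sumD, zero_ext.
  destruct (_ <? 0)%Z, (_ <? 0)%Z, (_ <? 0)%Z; rewrite ?H by (simpl; tauto); reflexivity.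
Qed.

Lemma offset_law_nonpos (pi : Z -> nat -> R) :
  pi 0%Z 0%nat = 0 -> pi 1%Z 0%nat = 0 -> pi 1%Z 1%nat = 0 ->
  forall b, (b <= 0)%Z -> offset_law pi b = 0.
Proof.
  intros H00 H10 H11 b Hb.
  assert (Hcases : (b <= -2 \/ b = -1 \/ b = 0)%Z) by lia.
  destruct Hcases as [Hb' | [-> | ->]]; unfold offset_law, sumD.
  - rewrite !zero_ext_neg by lia. ring.
  - unfold zero_ext. eval_ages. rewrite H10. ring.
  - unfold zero_ext. eval_ages. rewrite H00, H11. ring.
Qed.

Lemma fail_inflow_0 (pi : Z -> nat -> R) (d' : Z) : fail_inflow pi d' 0 = 0.
Proof.
  unfold fail_inflow, sumD. rewrite !sum_eq_R0; try ring;
    intros a _; rewrite ind_eqb_neq by (unfold aoi_fail; lia); ring.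
Qed.

Lemma fail_inflow_1 (pi : Z -> nat -> R) (d' : Z) :
  In d' deltas -> (forall b, (b <= 0)%Z -> offset_law pi b = 0) ->
  fail_inflow pi d' 1 = offset_law pi (- d').
Proof.
  intros Hd' Hvan.
  pose proof (Hvan (-1)%Z ltac:(lia)) as Hm. pose proof (Hvan 0%Z ltac:(lia)) as H0.
  revert Hm H0. simpl in Hd'. destruct Hd' as [<- | [<- | [<- | []]]];
    unfold fail_inflow, offset_law, sumD, zero_ext; eval_ages; intros; lra.
Qed.

Lemma sum_fail_terms_ge2 (pi : Z -> nat -> R) (d d' : Z) (a' : nat) :
  In d deltas -> In d' deltas -> (2 <= a')%nat ->
  sum_f_R0 (fun a => pi d a * Defs.ind (Nat.eqb a' (aoi_fail d a d'))) (S a')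
  = zero_ext pi d (Z.of_nat a' + d - d' - 1).
Proof.
  intros Hd%In_deltas_bounds Hd'%In_deltas_bounds Ha'.
  set (z := (Z.of_nat a' + d - d' - 1)%Z).
  destruct (Z.ltb_spec z 0) as [Hz | Hz].
  - rewrite zero_ext_neg by exact Hz. apply sum_eq_R0. intros a _.
    rewrite ind_eqb_neq; [ring |]. unfold aoi_fail, z in *. lia.
  - rewrite (sum_f_R0_single _ (Z.to_nat z)).
    + unfold zero_ext. destruct (Z.ltb_spec z 0); [lia |].
      rewrite ind_eqb_eq; [ring |]. unfold aoi_fail, z in *. lia.
    + unfold z. lia.
    + intros a Ha. rewrite ind_eqb_neq; [ring |]. unfold aoi_fail, z in *. lia.
Qed.

Lemma fail_inflow_offset (pi : Z -> nat -> R) (d' : Z) (a' : nat) :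
  In d' deltas -> (forall b, (b <= 0)%Z -> offset_law pi b = 0) -> (1 <= a')%nat ->
  fail_inflow pi d' a' = offset_law pi (Z.of_nat a' - d' - 1).
Proof.
  intros Hd' Hvan Ha'.
  destruct (Nat.eq_dec a' 1) as [-> | Ha'2].
  - rewrite fail_inflow_1 by assumption. f_equal. lia.
  - unfold fail_inflow, offset_law, sumD.
    rewrite !sum_fail_terms_ge2 by (simpl; tauto || lia).
    f_equal; [f_equal |]; f_equal; lia.
Qed.

Section Chain.
Variables ps pm p0 p1 : R.
Hypothesis hsum : pm + p0 + p1 = 1.

(* Lift a law [g] of [Delta(t-1) - delta(t-1)] to the law of [(delta(t), Delta(t))]. *)
Definition joint_law (g : Z -> R) (d : Z) (a : nat) : R :=
  match a with
  | O => 0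
  | S _ => pdelta pm p0 p1 d * (ps * Defs.ind (Nat.eqb a (aoi_succ d))
                                + (1 - ps) * g (Z.of_nat a - d - 1)%Z)
  end.

Lemma joint_law_no_reset (g : Z -> R) (d : Z) (a : nat) :
  (aoi_succ d < a)%nat ->
  joint_law g d a = pdelta pm p0 p1 d * ((1 - ps) * g (Z.of_nat a - d - 1)%Z).
Proof.
  intros Ha. destruct a as [| a]; [lia |].
  unfold joint_law. rewrite ind_eqb_neq by lia. ring.
Qed.

Lemma inflow_joint_law (pi : Z -> nat -> R) (d' : Z) (a' : nat) :
  In d' deltas -> (forall b, (b <= 0)%Z -> offset_law pi b = 0) ->
  inflow ps pm p0 p1 pi d' a' = joint_law (offset_law pi) d' a'.
Proof.
  intros Hd' Hvan. unfold inflow, joint_law. destruct a' as [|a'].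
  - rewrite fail_inflow_0, ind_eqb_neq by (unfold aoi_succ; lia). ring.
  - rewrite fail_inflow_offset by (assumption || lia). reflexivity.
Qed.

Lemma balanced_offset_law_nonpos (pi : Z -> nat -> R) :
  balanced ps pm p0 p1 pi -> forall b, (b <= 0)%Z -> offset_law pi b = 0.
Proof.
  intros Hbal.
  assert (Hage0 : forall d, In d deltas -> pi d 0%nat = 0).
  { intros d Hd. rewrite Hbal by exact Hd. unfold inflow.
    rewrite fail_inflow_0, ind_eqb_neq by (unfold aoi_succ; lia). ring. }
  apply offset_law_nonpos; try (apply Hage0; simpl; tauto).
  rewrite Hbal by (simpl; tauto). unfold inflow, fail_inflow, sumD. eval_ages.
  rewrite !Hage0 by (simpl; tauto). ring.
Qed.

Lemma balanced_joint_law (pi : Z -> nat -> R) :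
  balanced ps pm p0 p1 pi ->
  forall d a, In d deltas -> pi d a = joint_law (offset_law pi) d a.
Proof.
  intros Hbal d a Hd. rewrite Hbal by exact Hd.
  apply inflow_joint_law; [exact Hd |]. now apply balanced_offset_law_nonpos.
Qed.

Lemma joint_law_balanced (g : Z -> R) :
  (forall b, (b <= 0)%Z -> g b = 0) -> (forall b, offset_law (joint_law g) b = g b) ->
  balanced ps pm p0 p1 (joint_law g).
Proof.
  intros Hvan Hfix d' a' Hd'.
  rewrite inflow_joint_law; [| exact Hd' | intros b Hb; rewrite Hfix; auto].
  unfold joint_law. destruct a'; [reflexivity |]. now rewrite Hfix.
Qed.

(* Law of [Delta - delta] right after a success: [Delta = max 1 (delta + 1)]. *)
Definition reset_law (b : Z) : R :=
  if (b =? 1)%Z then 1 - pm else if (b =? 2)%Z then pm else 0.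

Lemma offset_law_joint_law (g : Z -> R) :
  (forall b, (b <= 0)%Z -> g b = 0) ->
  forall b, offset_law (joint_law g) b = ps * reset_law b + (1 - ps) * g (b - 1)%Z.
Proof.
  intros Hvan b.
  assert (Hcases : (b <= -2 \/ b = -1 \/ b = 0 \/ b = 1 \/ b = 2 \/ 3 <= b)%Z) by lia.
  destruct Hcases as [Hb | [-> | [-> | [-> | [-> | Hb]]]]].
  - unfold offset_law, sumD, reset_law. rewrite !zero_ext_neg, Hvan by lia.
    destruct (Z.eqb_spec b 1), (Z.eqb_spec b 2); lia || ring.
  - unfold offset_law, sumD, zero_ext, reset_law. eval_ages. rewrite Hvan by lia. ring.
  - unfold offset_law, sumD, zero_ext, reset_law, joint_law. eval_ages.
    rewrite Hvan by lia. ring.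
  - unfold offset_law, sumD, zero_ext, reset_law, joint_law, pdelta. eval_ages.
    rewrite Hvan by lia. replace p0 with (1 - pm - p1) by lra. ring.
  - unfold offset_law, sumD, zero_ext, reset_law, joint_law, pdelta. eval_ages.
    replace p0 with (1 - pm - p1) by lra. ring.
  - unfold offset_law, sumD, zero_ext.
    destruct (Z.ltb_spec (b + -1) 0), (Z.ltb_spec (b + 0) 0), (Z.ltb_spec (b + 1) 0); try lia.
    rewrite !joint_law_no_reset by (unfold aoi_succ; lia).
    rewrite !Z2Nat.id by lia.
    replace (b + -1 - -1 - 1)%Z with (b - 1)%Z by lia.
    replace (b + 0 - 0 - 1)%Z with (b - 1)%Z by lia.
    replace (b + 1 - 1 - 1)%Z with (b - 1)%Z by lia.
    unfold reset_law, pdelta. destruct (Z.eqb_spec b 1), (Z.eqb_spec b 2); try lia.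
    simpl. replace p0 with (1 - pm - p1) by lra. ring.
Qed.

Definition offset_pmf (b : Z) : R :=
  if (b <=? 0)%Z then 0
  else if (b =? 1)%Z then ps * (1 - pm)
  else ps * (1 - ps * (1 - pm)) * (1 - ps) ^ Z.to_nat (b - 2).

Lemma offset_pmf_nonpos (b : Z) : (b <= 0)%Z -> offset_pmf b = 0.
Proof. intros Hb. unfold offset_pmf. destruct (Z.leb_spec b 0); [reflexivity | lia]. Qed.

Lemma offset_pmf_ge2 (b : Z) :
  (2 <= b)%Z -> offset_pmf b = ps * (1 - ps * (1 - pm)) * (1 - ps) ^ Z.to_nat (b - 2).
Proof.
  intros Hb. unfold offset_pmf.
  destruct (Z.leb_spec b 0), (Z.eqb_spec b 1); [lia .. | reflexivity].
Qed.

Lemma offset_pmf_renewal (b : Z) :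
  offset_pmf b = ps * reset_law b + (1 - ps) * offset_pmf (b - 1).
Proof.
  assert (Hcases : (b <= 0 \/ b = 1 \/ b = 2 \/ 3 <= b)%Z) by lia.
  destruct Hcases as [Hb | [-> | [-> | Hb]]].
  - rewrite !offset_pmf_nonpos by lia. unfold reset_law.
    destruct (Z.eqb_spec b 1), (Z.eqb_spec b 2); lia || ring.
  - unfold offset_pmf, reset_law. simpl. ring.
  - unfold offset_pmf, reset_law. simpl. ring.
  - rewrite !offset_pmf_ge2 by lia. unfold reset_law.
    destruct (Z.eqb_spec b 1), (Z.eqb_spec b 2); try lia.
    replace (Z.to_nat (b - 2)) with (S (Z.to_nat (b - 1 - 2))) by lia. simpl. ring.
Qed.

Lemma balanced_offset_law (pi : Z -> nat -> R) :
  balanced ps pm p0 p1 pi -> forall b, offset_law pi b = offset_pmf b.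
Proof.
  intros Hbal.
  apply (first_order_recursion_unique (fun b => ps * reset_law b) (1 - ps)).
  - intros b Hb. rewrite offset_pmf_nonpos by exact Hb.
    now apply balanced_offset_law_nonpos.
  - intros b. rewrite (offset_law_ext _ _ (balanced_joint_law pi Hbal)).
    apply offset_law_joint_law. now apply balanced_offset_law_nonpos.
  - exact offset_pmf_renewal.
Qed.

Lemma balanced_unique (pi : Z -> nat -> R) :
  balanced ps pm p0 p1 pi ->
  forall d a, In d deltas -> pi d a = joint_law offset_pmf d a.
Proof.
  intros Hbal d a Hd. rewrite (balanced_joint_law pi Hbal d a Hd).
  unfold joint_law. destruct a; [reflexivity |]. now rewrite balanced_offset_law.
Qed.

Lemma joint_law_offset_pmf_balanced : balanced ps pm p0 p1 (joint_law offset_pmf).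
Proof.
  apply joint_law_balanced; [exact offset_pmf_nonpos |].
  intros b. rewrite offset_law_joint_law by exact offset_pmf_nonpos.
  symmetry. apply offset_pmf_renewal.
Qed.

Lemma marg_joint_law (i : nat) : marg (joint_law offset_pmf) i = aoi_pmf ps pm p0 p1 i.
Proof.
  destruct i as [| [| [| [| m]]]];
    try (unfold marg, sumD, joint_law, offset_pmf, pdelta, aoi_pmf; eval_ages; ring).
  unfold marg, sumD. rewrite !joint_law_no_reset by (unfold aoi_succ; lia).
  rewrite !offset_pmf_ge2 by lia.
  set (i := S (S (S (S m)))).
  replace (Z.to_nat (Z.of_nat i - -1 - 1 - 2)) with (S (S m)) by (unfold i; lia).
  replace (Z.to_nat (Z.of_nat i - 0 - 1 - 2)) with (S m) by (unfold i; lia).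
  replace (Z.to_nat (Z.of_nat i - 1 - 1 - 2)) with m by (unfold i; lia).
  unfold i, aoi_pmf, pdelta. simpl.
  replace (m - 0)%nat with m by lia. ring.
Qed.

Lemma marg_balanced (pi : Z -> nat -> R) :
  balanced ps pm p0 p1 pi -> forall i, marg pi i = aoi_pmf ps pm p0 p1 i.
Proof.
  intros Hbal i. rewrite <- marg_joint_law. unfold marg, sumD.
  rewrite !(balanced_unique pi Hbal) by (simpl; tauto). reflexivity.
Qed.

Lemma aoi_pmf_tail (k : nat) :
  aoi_pmf ps pm p0 p1 (4 + k) = aoi_pmf ps pm p0 p1 4 * (1 - ps) ^ k.
Proof.
  unfold aoi_pmf. replace (4 + k)%nat with (S (S (S (S k)))) by lia.
  replace (S (S (S (S k))) - 1)%nat with (3 + k)%nat by lia.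
  replace (S (S (S (S k))) - 2)%nat with (2 + k)%nat by lia.
  replace (S (S (S (S k))) - 3)%nat with (1 + k)%nat by lia.
  rewrite !pow_add. simpl. ring.
Qed.

Hypothesis hps : 0 < ps < 1.

Lemma is_series_aoi_pmf : is_series (aoi_pmf ps pm p0 p1) 1.
Proof.
  apply (is_series_shift_R _ 4); [lia |].
  apply (is_series_ext_R (fun k => (1 - ps) ^ k * aoi_pmf ps pm p0 p1 4)).
  { intros k. rewrite aoi_pmf_tail. ring. }
  replace (1 - sum_f_R0 (aoi_pmf ps pm p0 p1) (pred 4))
    with (/ (1 - (1 - ps)) * aoi_pmf ps pm p0 p1 4)
    by (simpl; replace p0 with (1 - pm - p1) by lra; field; lra).
  apply is_series_scal_r, is_series_geom. rewrite Rabs_pos_eq; lra.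
Qed.

Lemma is_series_aoi_mean :
  is_series (fun i => INR i * aoi_pmf ps pm p0 p1 i) (p1 + 1 / ps).
Proof.
  set (C := aoi_pmf ps pm p0 p1 4).
  apply (is_series_shift_R _ 4); [lia |].
  apply (is_series_ext_R (fun k => INR (S k) * (1 - ps) ^ k * C + (1 - ps) ^ k * (3 * C))).
  { intros k. rewrite aoi_pmf_tail. fold C. rewrite plus_INR, S_INR. simpl. ring. }
  replace (p1 + 1 / ps - sum_f_R0 (fun i => INR i * aoi_pmf ps pm p0 p1 i) (pred 4))
    with (/ (1 - (1 - ps)) * / (1 - (1 - ps)) * C + / (1 - (1 - ps)) * (3 * C))
    by (unfold C; simpl; replace p0 with (1 - pm - p1) by lra; field; lra).
  apply (is_series_plus (V := R_NormedModule)); apply is_series_scal_r.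
  - apply is_series_geom_deriv. lra.
  - apply is_series_geom. rewrite Rabs_pos_eq; lra.
Qed.

Hypotheses (hpm : 0 <= pm <= 1) (hp0 : 0 <= p0 <= 1) (hp1 : 0 <= p1 <= 1).

Lemma offset_pmf_nonneg (b : Z) : 0 <= offset_pmf b.
Proof.
  assert (0 <= 1 - ps * (1 - pm)) by nra.
  unfold offset_pmf. destruct (b <=? 0)%Z; [lra |]. destruct (b =? 1)%Z; [nra |].
  apply Rmult_le_pos; [nra | apply pow_le; lra].
Qed.

Lemma joint_law_nonneg (d : Z) (a : nat) : In d deltas -> 0 <= joint_law offset_pmf d a.
Proof.
  intros Hd. destruct a as [| a]; [simpl; lra |]. unfold joint_law.
  assert (0 <= pdelta pm p0 p1 d)
    by (simpl in Hd; destruct Hd as [<- | [<- | [<- | []]]]; unfold pdelta; simpl; lra).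
  assert (0 <= Defs.ind (Nat.eqb (S a) (aoi_succ d))) by (unfold Defs.ind; destruct (_ =? _); lra).
  pose proof (offset_pmf_nonneg (Z.of_nat (S a) - d - 1)).
  apply Rmult_le_pos; nra.
Qed.

Lemma joint_law_stationary : stationary ps pm p0 p1 (joint_law offset_pmf).
Proof.
  assert (Htot : is_series (fun a => sumD (fun d => joint_law offset_pmf d a)) 1).
  { apply (is_series_ext_R (aoi_pmf ps pm p0 p1)); [| exact is_series_aoi_pmf].
    intros a. symmetry. apply marg_joint_law. }
  split; [| split; [| split]].
  - intros d a Hd. now apply joint_law_nonneg.
  - reflexivity.
  - exact Htot.
  - intros d' a' Hd'. rewrite (joint_law_offset_pmf_balanced d' a' Hd').
    now apply is_series_inflow.
Qed.

End Chain.

Theorem mainTheorem4 (ps pm p0 p1 : R)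
  (hps : 0 < ps < 1)
  (hpm : 0 <= pm <= 1) (hp0 : 0 <= p0 <= 1) (hp1 : 0 <= p1 <= 1)
  (hsum : pm + p0 + p1 = 1) :
  (exists pi, stationary ps pm p0 p1 pi) /\
  (forall pi, stationary ps pm p0 p1 pi ->
     (forall i : nat, (1 <= i)%nat -> marg pi i = aoi_pmf ps pm p0 p1 i) /\
     is_series (fun i : nat => INR i * marg pi i) (p1 + 1 / ps)).
Proof.
  split.
  - exists (joint_law ps pm p0 p1 (offset_pmf ps pm)). now apply joint_law_stationary.
  - intros pi Hst.
    pose proof (marg_balanced ps pm p0 p1 hsum pi (stationary_balanced _ _ _ _ _ Hst)) as Hmarg.
    split; [intros i _; apply Hmarg |].
    apply (is_series_ext_R (fun i => INR i * aoi_pmf ps pm p0 p1 i)).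
    + intros i. now rewrite Hmarg.
    + now apply is_series_aoi_mean.
Qed.
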